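(* Let $G$ be a Lie group, $M$ a smooth manifold, $\Phi : G\times M\to M$ a smooth left action, and $\phi : \mathbb{R}\times M\to M$ a flow. Then the following are equivalent: (i) for every $t\in\mathbb{R}$, the diffeomorphism $\phi_t$ is weakly $\Phi$-invariant; (ii) there exists $\varepsilon>0$ such that for every $t\in(-\varepsilon,\varepsilon)$, $\phi_t$ is weakly $\Phi$-invariant.
   Context: A flow is a smooth map $\phi:\mathbb{R}\times M\to M$ with $\phi_{t_1+t_2} = \phi_{t_1}\circ\phi_{t_2}$ and $\phi_0 = \mathrm{id}_M$. A diffeomorphism $f : M\to M$ is weakly $\Phi$-invariant if there exists a map $\sigma : G\to G$ such that $f = \Phi_{\sigma(g)^{-1}}\circ f\circ\Phi_g$ for all $g\in G$, where $\Phi_g = \Phi(g,\cdot)$. *)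

From Stdlib Require Import Reals.
Open Scope R_scope.

Definition is_group {G : Type} (mul : G -> G -> G) (inv : G -> G) (e : G) : Prop :=
  (forall a b c, mul a (mul b c) = mul (mul a b) c) /\
  (forall a, mul e a = a) /\ (forall a, mul a e = a) /\
  (forall a, mul (inv a) a = e) /\ (forall a, mul a (inv a) = e).

Definition is_left_action {G M : Type} (mul : G -> G -> G) (e : G)
  (Phi : G -> M -> M) : Prop :=
  (forall x, Phi e x = x) /\
  (forall g h x, Phi (mul g h) x = Phi g (Phi h x)).

Definition is_flow {M : Type} (phi : R -> M -> M) : Prop :=
  (forall x, phi 0 x = x) /\
  (forall t1 t2 x, phi (t1 + t2) x = phi t1 (phi t2 x)).

Definition weakly_invariant {G M : Type} (inv : G -> G) (Phi : G -> M -> M)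
  (f : M -> M) : Prop :=
  exists sigma : G -> G, forall g x, f x = Phi (inv (sigma g)) (f (Phi g x)).

(* Writing weak invariance as f o Phi_g = Phi_(sigma g) o f shows that weakly
   invariant maps are closed under composition, so the times t for which phi_t
   is weakly invariant form an additive semigroup. Every real t is a positive
   integer multiple of some s in (-eps, eps), hence phi_t = (phi_s)^n. *)

From Stdlib Require Import Reals Lra.
Open Scope R_scope.

Section WeaklyInvariant.

Variables (G M : Type) (mul : G -> G -> G) (inv : G -> G) (e : G).
Variable Phi : G -> M -> M.
Hypothesis HG : is_group mul inv e.
Hypothesis HPhi : is_left_action mul e Phi.

Lemma weakly_invariant_iff (f : M -> M) :
  weakly_invariant inv Phi f <->
  exists sigma : G -> G, forall g x, f (Phi g x) = Phi (sigma g) (f x).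
Proof.
  destruct HG as [_ [_ [_ [mulVg mulgV]]]]; destruct HPhi as [act1 actM].
  split; intros [sigma Hsigma]; exists sigma; intros g x.
  - rewrite (Hsigma g x), <- actM, mulgV, act1; reflexivity.
  - rewrite Hsigma, <- actM, mulVg, act1; reflexivity.
Qed.

Lemma weakly_invariant_comp (F f h : M -> M) :
  (forall x, F x = f (h x)) ->
  weakly_invariant inv Phi f -> weakly_invariant inv Phi h ->
  weakly_invariant inv Phi F.
Proof.
  intros HF Hf Hh.
  apply weakly_invariant_iff in Hf as [sf Hsf].
  apply weakly_invariant_iff in Hh as [sh Hsh].
  apply weakly_invariant_iff.
  exists (fun g => sf (sh g)); intros g x.
  rewrite !HF, Hsh, Hsf; reflexivity.
Qed.

Variable phi : R -> M -> M.
Hypothesis Hphi : is_flow phi.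

Lemma flow_add_weakly_invariant (s t : R) :
  weakly_invariant inv Phi (phi s) -> weakly_invariant inv Phi (phi t) ->
  weakly_invariant inv Phi (phi (s + t)).
Proof.
  destruct Hphi as [_ flowD].
  apply weakly_invariant_comp, flowD.
Qed.

Lemma flow_nat_mul_weakly_invariant (s : R) (n : nat) :
  weakly_invariant inv Phi (phi s) ->
  weakly_invariant inv Phi (phi (INR (S n) * s)).
Proof.
  intros Hs; induction n as [|n IHn].
  - replace (INR 1 * s) with s by (simpl; ring); exact Hs.
  - replace (INR (S (S n)) * s) with (s + INR (S n) * s)
      by (rewrite (S_INR (S n)); ring).
    exact (flow_add_weakly_invariant _ _ Hs IHn).
Qed.

End WeaklyInvariant.

Lemma real_eq_succ_nat_mul_small (eps t : R) :
  0 < eps -> exists (n : nat) (s : R), -eps < s < eps /\ t = INR (S n) * s.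
Proof.
  intros Heps.
  destruct (INR_unbounded (Rabs t / eps)) as [n Hn].
  assert (Hpos : 0 < INR (S n)) by apply lt_0_INR, Nat.lt_0_succ.
  assert (Hbound : Rabs t < eps * INR (S n)).
  { rewrite S_INR.
    apply (Rmult_lt_compat_l eps) in Hn; [|exact Heps].
    replace (eps * (Rabs t / eps)) with (Rabs t) in Hn by (field; lra).
    lra. }
  assert (Hsmall : Rabs (t / INR (S n)) < eps).
  { unfold Rdiv.
    rewrite Rabs_mult, Rabs_inv, (Rabs_right (INR (S n))) by lra.
    apply (Rmult_lt_reg_r (INR (S n))); [exact Hpos|].
    replace (Rabs t * / INR (S n) * INR (S n)) with (Rabs t) by (field; lra).
    exact Hbound. }
  apply Rabs_def2 in Hsmall.
  exists n, (t / INR (S n)); split.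
  - lra.
  - field; lra.
Qed.

Theorem lemma1 (G M : Type) (mul : G -> G -> G) (inv : G -> G) (e : G)
  (Phi : G -> M -> M) (phi : R -> M -> M)
  (HG : is_group mul inv e) (HPhi : is_left_action mul e Phi)
  (Hphi : is_flow phi) :
  (forall t : R, weakly_invariant inv Phi (phi t)) <->
  (exists eps : R, 0 < eps /\
     forall t : R, -eps < t < eps -> weakly_invariant inv Phi (phi t)).
Proof.
  split.
  - intros Hall; exists 1; split; [lra | intros t _; apply Hall].
  - intros [eps [Heps Hsmall]] t.
    destruct (real_eq_succ_nat_mul_small eps t Heps) as [n [s [Hs ->]]].
    apply (flow_nat_mul_weakly_invariant G M mul inv e Phi HG HPhi phi Hphi).
    exact (Hsmall s Hs).
Qed.
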